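(* Let inputs represent tuples of $C$ categorical components via a compositionally structured input representation with kernel value $\kappa_k$ for pairs of inputs sharing exactly $k$ components, where $\kappa_0<\kappa_k<\kappa_C$ for $0<k<C$. Pass these inputs through an infinite-width random neural network with (leaky) ReLU nonlinearity $\sigma(u)=A\min(u,0)+\max(u,0)$, $A\in[0,1)$, whose layer-$l$ kernel is given recursively by $K^{(0)}=K$ and $$K^{(l+1)}(x,x')=s^2\sqrt{K^{(l)}(x,x)K^{(l)}(x',x')}\;k\!\left(\frac{K^{(l)}(x,x')}{\sqrt{K^{(l)}(x,x)K^{(l)}(x',x')}}\right),\quad k(u)=\frac{(1-A)^2}{2\pi}\Big(\sqrt{1-u^2}+(\pi-\cos^{-1}u)\,u\Big)+Au,$$ with $s^2>0$ the weight variance. Let $S^{(L)}(k;C)$ denote the representational salience of overlap $k$ in layer $L$. Then as $L\to\infty$, $S^{(L)}(k;C)\to 0$ for every $k<C$ and $S^{(L)}(C;C)\to 1$.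
   Context: A representation is compositionally structured if the similarity of two inputs depends only on the number of shared components; each layer $K^{(l)}$ is then also compositionally structured, with similarity $\kappa^{(l)}_{|J|}$ for inputs sharing exactly the components in $J$. Representational salience of such a kernel: define recursively $\overline{S}(\emptyset):=\kappa_0$, $\overline{S}(J):=\kappa_{|J|}-\sum_{J'\subsetneq J}\overline{S}(J')$ for $J\subseteq\{1,\dots,C\}$, and $S(J):=\overline{S}(J)/\sum_{\emptyset\ne J'\subseteq\{1,\dots,C\}}\overline{S}(J')$; since this depends only on $|J|$, write $S(k;C):=S(J)$ for $|J|=k$. *)

From HB Require Import structures.
From mathcomp Require Import all_boot all_order all_algebra.
From mathcomp Require Import all_classical all_reals all_analysis.
Set Implicit Arguments. Unset Strict Implicit. Unset Printing Implicit Defensive.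
Import Order.TTheory GRing.Theory Num.Theory.
Local Open Scope ring_scope.

Section Defs.
Variable R : realType.

Definition relu_k (A u : R) : R :=
  (1 - A) ^+ 2 / (2 * pi) * (Num.sqrt (1 - u ^+ 2) + (pi - acos u) * u) + A * u.

(* One layer of the infinite-width network acting on a compositionally
   structured kernel, encoded by its values kap k (k = 0..C shared components).
   The diagonal value K(x,x) is kap C for every input x. *)
Definition next_layer (C : nat) (s2 A : R) (kap : nat -> R) : nat -> R :=
  fun k => s2 * Num.sqrt (kap C * kap C) *
           relu_k A (kap k / Num.sqrt (kap C * kap C)).

Fixpoint layer_kernel (C : nat) (s2 A : R) (kap : nat -> R) (L : nat) : nat -> R :=
  match L with
  | 0 => kap
  | L'.+1 => next_layer C s2 A (layer_kernel C s2 A kap L')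
  end.

Fixpoint Sbar_fuel (C : nat) (kap : nat -> R) (n : nat) (J : {set 'I_C}) : R :=
  match n with
  | 0 => kap 0%N
  | n'.+1 => kap #|J| - \sum_(J' : {set 'I_C} | J' \proper J) Sbar_fuel kap n' J'
  end.

Definition Sbar (C : nat) (kap : nat -> R) (J : {set 'I_C}) : R :=
  Sbar_fuel kap (#|J|).+1 J.

Definition salience (C : nat) (kap : nat -> R) (J : {set 'I_C}) : R :=
  Sbar kap J / \sum_(J' : {set 'I_C} | J' != finset.set0) Sbar kap J'.

(* S(k;C) := S(J) for the representative J = {first k components}, |J| = k for k <= C *)
Definition salience_k (C : nat) (kap : nat -> R) (k : nat) : R :=
  salience kap [set i : 'I_C | (i < k)%N].

End Defs.

Arguments relu_k {R} A u.
Arguments next_layer {R} C s2 A kap k.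
Arguments layer_kernel {R} C s2 A kap L k.
Arguments Sbar_fuel {R} C kap n J.
Arguments Sbar {R} C kap J.
Arguments salience {R} C kap J.
Arguments salience_k {R} C kap k.

From HB Require Import structures.
From mathcomp Require Import all_boot all_order all_algebra.
From mathcomp Require Import all_classical all_reals all_analysis.
From mathcomp Require Import ring lra.
Import Order.TTheory GRing.Theory Num.Theory.
Import numFieldNormedType.Exports.
Local Open Scope classical_set_scope.
Local Open Scope ring_scope.

(* On the diagonal every layer multiplies the kernel by [s2 * k 1], so the
   layer-[L] correlations [K(x,x') / K(x,x)] are the [L]-th iterates of
   [f u = k u / k 1] on the input correlations.  Now [f] is increasing on
   [[-1, 1]] with [f u - u = c * g u], where [g u = sqrt (1 - u^2) - u acos u] is
   positive on [[-1, 1)] and at most [acos u * (1 - u)].  Hence every orbit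
   climbs to [1], each step shrinking its distance to [1] by a factor tending
   to [1], so the distances to [1] of two orbits are asymptotically equal.
   Salience is invariant under affine changes of the kernel values; rescaled to
   [(rho_k - rho_0) / (1 - rho_0)] they tend to the indicator of [k = C], whose
   salience is the indicator of the full set. *)

Section Trigonometry.
Context {R : realType}.
Implicit Types x y t : R.

Lemma is_derive_gt0_homo (f df : R -> R) (a b : R) :
  (forall x, is_derive x 1 f (df x)) -> (forall x, x \in `]a, b[ -> 0 < df x) ->
  {in `[a, b] &, {homo f : x y / x < y}}.
Proof.
move=> f' df_gt0; apply: gtr0_derive1_lt_cc.
- by move=> x _; exact: ex_derive.
- by move=> x; rewrite derive1E derive_val; exact: df_gt0.
- apply: continuous_subspaceT => x.
  by apply/differentiable_continuous/derivable1_diffP; exact: ex_derive.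
Qed.

Lemma cos_lt1 t : 0 < t <= pi -> cos t < 1.
Proof.
move=> /andP[t0 tpi]; rewrite -cos0 ltr_cos // in_itv /= ?lexx ?pi_ge0 //.
by rewrite ltW.
Qed.

Lemma sin_le_id {t} : t \in `[0, pi] -> sin t <= t.
Proof.
move=> t0pi; rewrite -subr_ge0; have [<-|t_neq0] := eqVneq 0 t.
  by rewrite sin0 subrr.
have sub_sin' x : is_derive x 1 (fun s => s - sin s) (1 - cos x) by apply: is_deriveB.
have homo := @is_derive_gt0_homo _ (fun s => 1 - cos s) 0 pi sub_sin'.
apply: ltW; rewrite -[X in X < _](subr0 0) -{2}sin0; apply: homo => //.
- by move=> x; rewrite in_itv /= => /andP[x0 xpi]; rewrite subr_gt0 cos_lt1 // x0 ltW.
- by rewrite in_itv /= lexx pi_ge0.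
- by rewrite lt_neqAle t_neq0; case/andP: (t0pi).
Qed.

Lemma sin_sub_mul_cos_homo :
  {in `[0, pi] &, {homo (fun t => sin t - t * cos t) : s t / s < t}}.
Proof.
apply: (@is_derive_gt0_homo _ (fun t => t * sin t)).
- move=> x /=; have -> : x * sin x = cos x - (x * - sin x + cos x * 1) by ring.
  by apply: is_deriveB.
- by move=> x; rewrite in_itv /= => /andP[x0 xpi]; rewrite mulr_gt0 // sin_gt0_pi ?x0.
Qed.

(* Cho and Saul's [J_1]: the ReLU kernel as a function of the angle [t = acos u]. *)
Lemma sin_add_pi_sub_mul_cos_nhomo :
  {in `[0, pi] &, {homo (fun t => sin t + (pi - t) * cos t) : s t /~ s < t}}.
Proof.
move=> s t s0 t0 st; rewrite -ltrN2.
apply: (@is_derive_gt0_homo (fun t => - (sin t + (pi - t) * cos t))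
                            (fun t => (pi - t) * sin t) 0 pi) => //.
- move=> x /=.
  have -> : (pi - x) * sin x = - (cos x + ((pi - x) * - sin x + cos x * (0 - 1))) by ring.
  by apply: is_deriveN; apply: is_deriveD; apply: is_deriveM; apply: is_deriveB.
- move=> x; rewrite in_itv /= => /andP[x0 xpi] /=.
  by rewrite mulr_gt0 ?subr_gt0 // sin_gt0_pi ?x0.
Qed.

Lemma acos_itv {x} : x \in `[-1, 1] -> acos x \in `[0, pi].
Proof. by rewrite !in_itv /= => x1; rewrite acos_ge0 // acos_lepi. Qed.

Lemma ltr_acos : {in `[-1, 1] &, {mono @acos R : x y /~ x < y}}.
Proof.
move=> x y x1 y1 /=.
by rewrite -ltr_cos ?acos_itv // !acosK.
Qed.

Lemma ler_acos : {in `[-1, 1] &, {mono @acos R : x y /~ x <= y}}.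
Proof. by move=> x y x1 y1; rewrite !leNgt ltr_acos. Qed.

Definition acos_gap x := Num.sqrt (1 - x ^+ 2) - x * acos x.

Lemma acos_gapE x : x \in `[-1, 1] ->
  acos_gap x = sin (acos x) - acos x * cos (acos x).
Proof. by move=> x1; rewrite /acos_gap sin_acos -?in_itv // acosK // mulrC. Qed.

Lemma acos_gap_gt0 x : -1 <= x < 1 -> 0 < acos_gap x.
Proof.
move=> /andP[xN1 x_lt1]; have x1 : x \in `[-1, 1] by rewrite in_itv /= xN1 ltW.
rewrite acos_gapE //; have := @sin_sub_mul_cos_homo 0 (acos x).
rewrite sin0 mul0r subr0; apply; rewrite ?acos_itv // ?in_itv /= ?lexx ?pi_ge0 //.
by rewrite acos_gt0 // xN1.
Qed.

Lemma acos_gap_nincr : {in `[-1, 1] &, {homo acos_gap : x y /~ x <= y}}.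
Proof.
move=> x y x1 y1; rewrite le_eqVlt => /predU1P[->//|xy].
rewrite !acos_gapE //; apply/ltW/sin_sub_mul_cos_homo; rewrite ?acos_itv //.
by rewrite ltr_acos.
Qed.

Lemma acos_gap_le x : x \in `[-1, 1] -> acos_gap x <= acos x * (1 - x).
Proof.
move=> x1; have := sin_le_id (acos_itv x1).
by rewrite acos_gapE // acosK //; lra.
Qed.

End Trigonometry.

Section ReluKernel.
Context {R : realType}.
Variable A : R.
Hypotheses (A_ge0 : 0 <= A) (A_lt1 : A < 1).
Implicit Types u v x y : R.

Let pi_neq0 : (pi : R) != 0. Proof. by rewrite gt_eqF ?pi_gt0. Qed.

Lemma relu_k1 : relu_k A 1 = (1 + A ^+ 2) / 2.
Proof.
rewrite /relu_k expr1n subrr sqrtr0 acos1 add0r subr0 mulr1.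
(* [field] would unfold [pi]; abstract it first. *)
by move: pi_neq0; move: (pi : R) => p p_neq0; field.
Qed.

Lemma relu_k1_gt0 : 0 < relu_k A 1.
Proof. by rewrite relu_k1 divr_gt0 // ltr_wpDr // sqr_ge0. Qed.

Lemma relu_kE u :
  relu_k A u = (1 + A ^+ 2) / 2 * u + (1 - A) ^+ 2 / (2 * pi) * acos_gap u.
Proof.
by rewrite /relu_k /acos_gap; move: pi_neq0; move: (pi : R) => p p_neq0; field.
Qed.

Lemma relu_k_homo : {in `[-1, 1] &, {homo relu_k A : u v / u < v}}.
Proof.
have angleE w : w \in `[-1, 1] ->
    Num.sqrt (1 - w ^+ 2) + (pi - acos w) * w = sin (acos w) + (pi - acos w) * cos (acos w).
  by move=> w1; rewrite sin_acos -?in_itv // acosK.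
move=> u v u1 v1 uv; rewrite /relu_k !angleE //; apply: ltr_leD; last exact: ler_wpM2l (ltW uv).
rewrite ltr_pM2l; last by rewrite divr_gt0 ?mulr_gt0 ?pi_gt0 ?exprn_gt0 ?subr_gt0.
by apply: sin_add_pi_sub_mul_cos_nhomo; rewrite ?acos_itv ?ltr_acos.
Qed.

Definition relu_corr u := relu_k A u / relu_k A 1.

Local Notation slope := ((1 - A) ^+ 2 / (2 * pi) / ((1 + A ^+ 2) / 2)).

Let slope_gt0 : 0 < slope.
Proof.
by rewrite divr_gt0 ?divr_gt0 ?mulr_gt0 ?pi_gt0 ?exprn_gt0 ?subr_gt0 ?ltr_wpDr ?sqr_ge0.
Qed.

Lemma relu_corr1 : relu_corr 1 = 1.
Proof. by rewrite /relu_corr divff // gt_eqF ?relu_k1_gt0. Qed.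

Lemma relu_corrE x : relu_corr x = x + slope * acos_gap x.
Proof.
rewrite /relu_corr relu_kE relu_k1.
have k1_neq0 : 1 + A ^+ 2 != 0 by rewrite gt_eqF ?ltr_wpDr ?sqr_ge0.
by move: pi_neq0; move: (pi : R) => p p_neq0; field; rewrite k1_neq0 p_neq0.
Qed.

Lemma relu_corr_homo : {in `[-1, 1] &, {homo relu_corr : x y / x < y}}.
Proof.
by move=> x y x1 y1 xy; rewrite ltr_pM2r ?relu_k_homo // invr_gt0 relu_k1_gt0.
Qed.

Lemma relu_corr_gap y : -1 <= y < 1 ->
  exists2 d, 0 < d & forall x, -1 <= x <= y -> x + d <= relu_corr x.
Proof.
move=> /andP[yN1 y_lt1]; exists (slope * acos_gap y).
  by rewrite mulr_gt0 ?acos_gap_gt0 ?yN1.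
move=> x /andP[xN1 xy]; rewrite relu_corrE lerD2l; apply: ler_wpM2l; first exact: ltW.
apply: acos_gap_nincr => //; rewrite in_itv /=; first by rewrite yN1 ltW.
by rewrite xN1 ltW // (le_lt_trans xy).
Qed.

Lemma relu_corr_slow e : 0 < e ->
  exists2 y, y < 1 & forall x, y <= x < 1 -> (1 - e) * (1 - x) <= 1 - relu_corr x.
Proof.
move=> e_gt0; pose t := Num.min (e / slope) pi.
have t_gt0 : 0 < t by rewrite lt_min divr_gt0 ?pi_gt0.
have t_itv : t \in `[0, pi] by rewrite in_itv /= ltW // ge_min lexx orbT.
exists (cos t); first by rewrite cos_lt1 // t_gt0 ge_min lexx orbT.
move=> x /andP[tx x_lt1].
have x1 : x \in `[-1, 1] by rewrite in_itv /= (le_trans (cos_geN1 t) tx) ltW.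
have acos_le : slope * acos x <= e.
  rewrite mulrC -ler_pdivlMr //; apply: (@le_trans _ _ t); last by rewrite ge_min lexx.
  by rewrite -[t in _ <= t]cosK // ler_acos // in_itv /= cos_geN1 cos_le1.
have gap_le : slope * acos_gap x <= e * (1 - x).
  rewrite (le_trans (ler_wpM2l (ltW slope_gt0) (acos_gap_le x x1))) // mulrA.
  by rewrite ler_wpM2r // subr_ge0 ltW.
by rewrite relu_corrE; lra.
Qed.

End ReluKernel.
Arguments relu_corr {R} A u.

Section OrbitsToOne.
Context {R : realType}.
Variable f : R -> R.
Hypothesis f_homo : {in `[-1, 1] &, {homo f : x y / x < y}}.
Hypothesis f1 : f 1 = 1.
Hypothesis f_gap : forall y, -1 <= y < 1 ->
  exists2 d, 0 < d & forall x, -1 <= x <= y -> x + d <= f x.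
Hypothesis f_slow : forall e, 0 < e ->
  exists2 y, y < 1 & forall x, y <= x < 1 -> (1 - e) * (1 - x) <= 1 - f x.
Implicit Types x y : R.

Lemma map_ge_id {x} : -1 <= x < 1 -> x <= f x.
Proof.
move=> x_itv; have [d d_gt0 gap] := f_gap x x_itv.
case/andP: x_itv => xN1 _; apply: le_trans (gap x _); last by rewrite xN1 lexx.
by rewrite lerDl ltW.
Qed.

Lemma iter_itv {x} n : -1 <= x < 1 -> -1 <= iter n f x < 1.
Proof.
move=> x_itv; elim: n => //= n xn_itv; have /andP[xnN1 xn_lt1] := xn_itv.
rewrite (le_trans xnN1 (map_ge_id xn_itv)) /= -[X in _ < X]f1.
apply: f_homo => //; rewrite in_itv /= ?lexx ?andbT ?xnN1 ?(ltW xn_lt1) //; lra.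
Qed.

Lemma iter_le x y n : -1 <= x -> x <= y -> y < 1 -> iter n f x <= iter n f y.
Proof.
move=> xN1 xy y_lt1; have x_itv : -1 <= x < 1 by rewrite xN1 (le_lt_trans xy).
have y_itv : -1 <= y < 1 by rewrite (le_trans xN1 xy).
elim: n => //= n IH; apply: (ltW_homo_in f_homo) => //; rewrite in_itv /=.
  by case/andP: (iter_itv n x_itv) => -> /ltW.
by case/andP: (iter_itv n y_itv) => -> /ltW.
Qed.

Lemma iter_nondecreasing x : -1 <= x < 1 -> nondecreasing_seq (fun n => iter n f x).
Proof.
by move=> x_itv; apply/nondecreasing_seqP => n; exact: map_ge_id (iter_itv n x_itv).
Qed.

Lemma iter_exceeds {x y} : -1 <= x < 1 -> y < 1 -> exists n, y < iter n f x.
Proof.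
move=> x_itv y_lt1; have [yx|xy] := ltP y x; first by exists 0%N.
have /andP[xN1 _] := x_itv.
have y_itv : -1 <= y < 1 by rewrite y_lt1 (le_trans xN1 xy).
have [d d_gt0 gap] := f_gap y y_itv.
have climb n : iter n f x <= y -> x + n%:R * d <= iter n f x.
  elim: n => [|n IH] xn_le; first by rewrite mul0r addr0.
  have xn_itv := iter_itv n x_itv; case/andP: (xn_itv) => xnN1 _.
  have xn_le' : iter n f x <= y.
    by apply: le_trans xn_le; exact: iter_nondecreasing.
  apply: le_trans (gap _ _); last by rewrite xnN1.
  by rewrite -natr1 mulrDl mul1r addrA lerD2r IH.
pose n := Num.bound ((y - x) / d); exists n; rewrite ltNge; apply/negP => xn_le.
have := climb n xn_le; have : (y - x) / d < n%:R.
  by apply: archi_boundP; rewrite divr_ge0 ?subr_ge0 // ltW.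
by rewrite ltr_pdivrMr //; lra.
Qed.

Lemma iter_succ_ratio_cvg {x} : -1 <= x < 1 ->
  (1 - iter n.+1 f x) / (1 - iter n f x) @[n --> \oo] --> (1 : R).
Proof.
move=> x_itv; apply/cvgrPdist_le => e e_gt0.
have [y y_lt1 slow] := f_slow e e_gt0; have [N yN] := iter_exceeds x_itv y_lt1.
near=> n; have /andP[xnN1 xn_lt1] := iter_itv n x_itv.
have dist_gt0 : 0 < 1 - iter n f x by rewrite subr_gt0.
have yn : y <= iter n f x.
  apply: le_trans (ltW yN) _; apply: iter_nondecreasing => //.
  by near: n; exists N.
have ratio_le1 : (1 - iter n.+1 f x) / (1 - iter n f x) <= 1.
  by rewrite ler_pdivrMr // mul1r lerD2l lerN2 map_ge_id ?xnN1.
have ratio_ge : 1 - e <= (1 - iter n.+1 f x) / (1 - iter n f x).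
  by rewrite ler_pdivlMr // slow // yn.
by rewrite ger0_norm ?subr_ge0 //; lra.
Unshelve. all: end_near.
Qed.

Lemma iter_shift_ratio_cvg {x} m : -1 <= x < 1 ->
  (1 - iter (n + m) f x) / (1 - iter n f x) @[n --> \oo] --> (1 : R).
Proof.
move=> x_itv; have dist_neq0 n : 1 - iter n f x != 0.
  by case/andP: (iter_itv n x_itv) => _; rewrite subr_eq0 => /gt_eqF ->.
elim: m => [|m IH].
  by under eq_fun do rewrite addn0 divff //; exact: cvg_cst.
have shifted : (fun n => (1 - iter (n + m).+1 f x) / (1 - iter (n + m) f x)) @ \oo --> (1 : R).
  by have := iter_succ_ratio_cvg x_itv; rewrite -(cvg_shiftn m).
have split_ratio n : (1 - iter (n + m.+1) f x) / (1 - iter n f x) =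
    (1 - iter (n + m).+1 f x) / (1 - iter (n + m) f x) *
    ((1 - iter (n + m) f x) / (1 - iter n f x)).
  by rewrite addnS mulrA divfK.
under eq_fun do rewrite split_ratio.
by apply: cvg_trans (cvgM shifted IH) _; rewrite mulr1.
Qed.

Lemma iter_dist_ratio_cvg {x y} : -1 <= x -> x <= y -> y < 1 ->
  (1 - iter n f y) / (1 - iter n f x) @[n --> \oo] --> (1 : R).
Proof.
move=> xN1 xy y_lt1; have x_itv : -1 <= x < 1 by rewrite xN1 (le_lt_trans xy).
have [m ym] := iter_exceeds x_itv y_lt1.
apply: (squeeze_cvgr (f := fun n => (1 - iter (n + m) f x) / (1 - iter n f x))
                    (h := fun _ => 1)); last 2 first.
- exact: iter_shift_ratio_cvg.
- exact: cvg_cst.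
near=> n; have /andP[_ xn_lt1] := iter_itv n x_itv.
have dist_gt0 : 0 < 1 - iter n f x by rewrite subr_gt0.
rewrite !ler_pdivrMr // mul1r divfK ?gt_eqF // !lerD2l !lerN2 iter_le //.
rewrite andbT iterD; apply: iter_le (ltW ym) _; first by rewrite (le_trans xN1 xy).
by case/andP: (iter_itv m x_itv).
Unshelve. all: end_near.
Qed.

End OrbitsToOne.

Section Salience.
Context {R : realType}.
Variable C : nat.
Implicit Types (u v : nat -> R) (J : {set 'I_C}).

Lemma card_set_ord_le J : (#|J| <= C)%N.
Proof. by rewrite -[C in (_ <= C)%N]card_ord max_card. Qed.

Lemma Sbar_fuel_enough u m n J : (#|J| < m)%N -> (#|J| < n)%N ->
  Sbar_fuel C u m J = Sbar_fuel C u n J.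
Proof.
elim: m n J => [|m IH] [|n] J //= Jm Jn; congr (_ - _); apply: eq_bigr => J' /proper_card J'J.
by apply: IH; [exact: leq_trans J'J Jm | exact: leq_trans J'J Jn].
Qed.

Lemma Sbar0 u : Sbar C u finset.set0 = u 0%N.
Proof. by rewrite /Sbar /= cards0 big1 ?subr0 // => J /proper_card; rewrite cards0. Qed.

Lemma sum_Sbar_subset u J : \sum_(J' : {set 'I_C} | J' \subset J) Sbar C u J' = u #|J|.
Proof.
have properE (J' : {set 'I_C}) : (J' \subset J) && (J' != J) = (J' \proper J).
  by rewrite finset.properEneq andbC.
rewrite (bigD1 J) //= {1}/Sbar /= [X in _ + X](eq_big _ (Sbar_fuel C u #|J|) properE).
  by rewrite subrK.
by move=> J'; rewrite properE => /proper_card J'J; exact: Sbar_fuel_enough.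
Qed.

Lemma sum_Sbar_nonempty u : \sum_(J : {set 'I_C} | J != finset.set0) Sbar C u J = u C - u 0%N.
Proof.
have := sum_Sbar_subset u finset.setT; rewrite cardsT card_ord => <-.
rewrite [in RHS](bigD1 finset.set0) ?finset.sub0set //= Sbar0 addrAC subrr add0r.
by apply: eq_bigl => J; rewrite finset.subsetT.
Qed.

Lemma salienceE u J : salience C u J = Sbar C u J / (u C - u 0%N).
Proof. by rewrite /salience sum_Sbar_nonempty. Qed.

Lemma Sbar_affine a b u J :
  Sbar C (fun j => a + b * u j) J = a * (J == finset.set0)%:R + b * Sbar C u J.
Proof.
suff fuelE n J' : (#|J'| < n)%N -> Sbar_fuel C (fun j => a + b * u j) n J' =
    a * (J' == finset.set0)%:R + b * Sbar_fuel C u n J' by exact: fuelE.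
elim: n J' => [|n IH] J' //= J'_lt.
rewrite (eq_bigr (fun K => a * (K == finset.set0)%:R + b * Sbar_fuel C u n K)); last first.
  by move=> K /proper_card KJ'; apply: IH; exact: leq_trans KJ' J'_lt.
rewrite big_split /= -!mulr_sumr.
have [->|J'_neq0] := eqVneq J' finset.set0.
  rewrite big1 ?mulr0 => [|K /proper_card]; last by rewrite cards0.
  by rewrite mulr1; ring.
rewrite (bigD1 finset.set0) ?proper0 //= eqxx big1 => [|K /andP[_ /negbTE ->] //].
by rewrite addr0 mulr1 mulr0; ring.
Qed.

Lemma salience_affine a b u J : b != 0 -> J != finset.set0 ->
  salience C (fun j => a + b * u j) J = salience C u J.
Proof.
move=> b_neq0 J_neq0; rewrite !salienceE Sbar_affine (negbTE J_neq0) mulr0 add0r.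
have -> : a + b * u C - (a + b * u 0%N) = b * (u C - u 0%N) by ring.
by rewrite -mulf_div divff // mul1r.
Qed.

Lemma Sbar_indicator J : Sbar C (fun j => (j == C)%:R) J = (J == finset.setT)%:R :> R.
Proof.
suff fuelE n J' : (#|J'| < n)%N ->
    Sbar_fuel C (fun j => (j == C)%:R) n J' = (J' == finset.setT)%:R :> R by exact: fuelE.
elim: n J' => [|n IH] J' //= J'_lt.
rewrite big1 ?subr0 => [|K KJ']; last first.
  rewrite IH ?(leq_trans (proper_card KJ')) //; case: eqP KJ' => // -> /proper_card.
  by rewrite cardsT card_ord ltnNge card_set_ord_le.
by rewrite eqEcard finset.subsetT cardsT card_ord eqn_leq card_set_ord_le.
Qed.

Lemma Sbar_cvg (u : nat -> nat -> R) v J :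
  (forall j, (j <= C)%N -> u L j @[L --> \oo] --> v j) ->
  Sbar C (u L) J @[L --> \oo] --> Sbar C v J.
Proof.
move=> u_cvg; rewrite /Sbar; move: #|J|.+1 => n.
elim: n J => [|n IH] J /=; first exact: u_cvg.
apply: cvgB; first exact/u_cvg/card_set_ord_le.
by apply: cvg_big => //; exact: add_continuous.
Qed.

End Salience.

Section LayerKernel.
Context {R : realType}.
Variables (C : nat) (s2 A : R).
Implicit Types kap : nat -> R.

Lemma next_layer_diag kap : 0 < kap C ->
  next_layer C s2 A kap C = s2 * kap C * relu_k A 1.
Proof.
by move=> kapC_gt0; rewrite /next_layer -expr2 sqrtr_sqr gtr0_norm // divff ?gt_eqF.
Qed.

Lemma next_layer_corr kap j : s2 != 0 -> 0 < kap C ->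
  next_layer C s2 A kap j / next_layer C s2 A kap C = relu_corr A (kap j / kap C).
Proof.
move=> s2_neq0 kapC_gt0; rewrite next_layer_diag // /next_layer -expr2.
rewrite sqrtr_sqr gtr0_norm // /relu_corr -mulf_div divff ?mul1r // mulf_neq0 // gt_eqF //.
Qed.

End LayerKernel.

Section DeepLimit.
Context {R : realType} {C : nat} {kap : nat -> R} {s2 A : R}.
Hypotheses (C_gt0 : (0 < C)%N) (s2_gt0 : 0 < s2) (A_ge0 : 0 <= A) (A_lt1 : A < 1).
Hypothesis kap0_lt : kap 0%N < kap C.
Hypothesis kap_mid : forall k, (0 < k < C)%N -> kap 0%N < kap k /\ kap k < kap C.
Hypothesis kap0_ge : - kap C <= kap 0%N.

Local Notation ker := (layer_kernel C s2 A kap).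
Local Notation rho L j := (iter L (relu_corr A) (kap j / kap C)).

Let kapC_gt0 : 0 < kap C.
Proof. by move: kap0_lt kap0_ge; lra. Qed.

Lemma layer_kernel_diag_gt0 L : 0 < ker L C.
Proof.
elim: L => [|L IH] //=; rewrite next_layer_diag //.
by rewrite !mulr_gt0 // relu_k1_gt0.
Qed.

Lemma layer_kernelE L j : ker L j = ker L C * rho L j.
Proof.
have ker_neq0 L' : ker L' C != 0 by rewrite gt_eqF ?layer_kernel_diag_gt0.
rewrite -[ker L j](divfK (ker_neq0 L)) mulrC; congr (_ * _).
elim: L => [//|L IH] /=.
by rewrite next_layer_corr ?gt_eqF ?layer_kernel_diag_gt0 // IH.
Qed.

Let corr_homo := relu_corr_homo A A_ge0 A_lt1.
Let corr_gap := relu_corr_gap A A_lt1.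
Let corr_slow := relu_corr_slow A A_lt1.

Lemma corr0_bounds j : (j < C)%N ->
  [/\ -1 <= kap 0%N / kap C, kap 0%N / kap C <= kap j / kap C & kap j / kap C < 1].
Proof.
move=> j_lt; have kapC_inv_gt0 : 0 < (kap C)^-1 by rewrite invr_gt0.
split; first by rewrite ler_pdivlMr // mulN1r.
  have [->//|j_gt0] := posnP j.
  by rewrite ler_pM2r //; apply/ltW; case: (kap_mid j); rewrite ?j_gt0.
rewrite ltr_pdivrMr // mul1r; have [->//|j_gt0] := posnP j.
by case: (kap_mid j); rewrite ?j_gt0.
Qed.

Lemma rho_lt1 L j : (j < C)%N -> rho L j < 1.
Proof.
case/corr0_bounds=> corr0N1 corr0j corrj_lt1.
have corrj_itv : -1 <= kap j / kap C < 1 by rewrite corrj_lt1 (le_trans corr0N1).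
by case/andP: (iter_itv _ corr_homo (relu_corr1 A) corr_gap L corrj_itv).
Qed.

Lemma rho_diag L : rho L C = 1.
Proof. by rewrite divff ?gt_eqF // iter_fix // relu_corr1. Qed.

Lemma salience_layer_kernel L J : J != finset.set0 ->
  salience C (ker L) J = Sbar C (fun j => (rho L j - rho L 0%N) / (1 - rho L 0%N)) J.
Proof.
move=> J_neq0; have dist_neq0 : 1 - rho L 0%N != 0.
  by rewrite subr_eq0 eq_sym lt_eqF // rho_lt1.
have -> : ker L = fun j => ker L C * rho L 0%N +
    ker L C * (1 - rho L 0%N) * ((rho L j - rho L 0%N) / (1 - rho L 0%N)).
  apply/funext => j; rewrite layer_kernelE -mulrA [_ * (_ / _)]mulrC divfK //.
  by rewrite -mulrDr addrC subrK.
have D_neq0 : ker L C != 0 by rewrite gt_eqF ?layer_kernel_diag_gt0.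
rewrite salience_affine ?mulf_neq0 //.
by rewrite salienceE rho_diag divff // subrr mul0r subr0 divr1.
Qed.

Lemma normalized_corr_cvg j : (j <= C)%N ->
  (rho L j - rho L 0%N) / (1 - rho L 0%N) @[L --> \oo] --> ((j == C)%:R : R).
Proof.
have dist_neq0 L : 1 - rho L 0%N != 0 by rewrite subr_eq0 eq_sym lt_eqF // rho_lt1.
rewrite leq_eqVlt => /predU1P[->|j_lt]; rewrite ?eqxx ?(ltn_eqF j_lt).
  by under eq_fun => L do rewrite rho_diag divff //; exact: cvg_cst.
have splitE (a b : R) : 1 - b != 0 -> (a - b) / (1 - b) = 1 - (1 - a) / (1 - b).
  by move=> b_neq1; field.
under eq_fun => L do rewrite (splitE _ _ (dist_neq0 L)).
have [corr0N1 corr0j corrj_lt1] := corr0_bounds j j_lt.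
have ratio := iter_dist_ratio_cvg _ corr_homo (relu_corr1 A) corr_gap corr_slow
  corr0N1 corr0j corrj_lt1.
by apply: cvg_trans (cvgB (cvg_cst (1 : R)) ratio) _; rewrite subrr.
Qed.

Lemma salience_layer_cvg J : J != finset.set0 ->
  salience C (ker L) J @[L --> \oo] --> ((J == finset.setT)%:R : R).
Proof.
move=> J_neq0; under eq_fun do rewrite salience_layer_kernel //.
by rewrite -Sbar_indicator; apply: Sbar_cvg => j; exact: normalized_corr_cvg.
Qed.

End DeepLimit.

Theorem proposition4 (R : realType) (C : nat) (kap : nat -> R) (s2 A : R) :
  (0 < C)%N ->
  0 < s2 ->
  0 <= A -> A < 1 ->
  kap 0%N < kap C ->
  (forall k, (0 < k < C)%N -> kap 0%N < kap k /\ kap k < kap C) ->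
  - kap C <= kap 0%N ->
  (forall k, (0 < k < C)%N ->
     salience_k C (layer_kernel C s2 A kap L) k @[L --> \oo] --> (0 : R)) /\
  (salience_k C (layer_kernel C s2 A kap L) C @[L --> \oo] --> (1 : R)).
Proof.
move=> C_gt0 s2_gt0 A_ge0 A_lt1 kap0_lt kap_mid kap0_ge.
have limit := salience_layer_cvg C_gt0 s2_gt0 A_ge0 A_lt1 kap0_lt kap_mid kap0_ge.
split=> [k /andP[k_gt0 k_lt]|]; rewrite /salience_k.
  have J_neq0 : [set i : 'I_C | (i < k)%N]%SET != finset.set0.
    by apply/set0Pn; exists (Ordinal C_gt0); rewrite inE.
  have J_neqT : [set i : 'I_C | (i < k)%N]%SET != finset.setT.
    by apply/eqP => /setP/(_ (Ordinal k_lt)); rewrite !inE ltnn.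
  by have := limit _ J_neq0; rewrite (negbTE J_neqT).
have JT : [set i : 'I_C | (i < C)%N]%SET = finset.setT.
  by apply/setP => i; rewrite !inE ltn_ord.
have J_neq0 : finset.setT != finset.set0 :> {set 'I_C}.
  by apply/set0Pn; exists (Ordinal C_gt0); rewrite inE.
by rewrite JT; have := limit _ J_neq0; rewrite eqxx.
Qed.
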